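(* Let $R$ be a ring. Then $R$ is feckly clean if and only if for any disjoint compact subsets $A,B$ of $\operatorname{Max}(R)$ there exists $e\in R$ such that $A\subseteq V(e)$, $B\subseteq V(1-e)$ and $eR(1-e)\subseteq J(R)$.
   Context: Rings are associative with identity, not necessarily commutative; $J(R)$ is the Jacobson radical. An element $u\in R$ is full if $RuR=R$. An element $a\in R$ is feckly clean if there exist $e\in R$ and a full element $u\in R$ with $a=e+u$ and $eR(1-e)\subseteq J(R)$; $R$ is feckly clean if every element is feckly clean. $\operatorname{Max}(R)$ is the set of all maximal (two-sided) ideals of $R$, topologized so that the closed sets are exactly the sets $V(I)=\{P\in\operatorname{Max}(R): I\subseteq P\}$ for ideals $I$ of $R$. For $a\in R$, $V(a)=V(RaR)$. *)

(* Rings: associative with identity, not necessarily commutative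
   (pzRingType: the zero ring is allowed). Subsets are Prop-valued predicates. *)
From HB Require Import structures.
From mathcomp Require Import all_boot all_order all_algebra.
Set Implicit Arguments. Unset Strict Implicit. Unset Printing Implicit Defensive.
Import GRing.Theory.
Local Open Scope ring_scope.

Section Defs.
Variable R : pzRingType.

Definition is_ideal (I : R -> Prop) : Prop :=
  [/\ I 0, (forall x y, I x -> I y -> I (x + y)),
      (forall r x, I x -> I (r * x)) & (forall r x, I x -> I (x * r))].

Definition is_left_ideal (L : R -> Prop) : Prop :=
  [/\ L 0, (forall x y, L x -> L y -> L (x + y)) & (forall r x, L x -> L (r * x))].

Definition proper (I : R -> Prop) : Prop := exists x, ~ I x.

Definition maximal_ideal (P : R -> Prop) : Prop :=
  [/\ is_ideal P, proper P &
      forall I, is_ideal I -> (forall x, P x -> I x) -> proper I ->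
        forall x, I x -> P x].

Definition maximal_left_ideal (L : R -> Prop) : Prop :=
  [/\ is_left_ideal L, proper L &
      forall I, is_left_ideal I -> (forall x, L x -> I x) -> proper I ->
        forall x, I x -> L x].

Definition jacobson (x : R) : Prop :=
  forall L, maximal_left_ideal L -> L x.

(* RaR : the two-sided ideal generated by a (finite sums of r a s) *)
Definition RaR (a : R) (x : R) : Prop :=
  exists n (r s : 'I_n -> R), x = \sum_(i < n) r i * a * s i.

Definition full (u : R) : Prop := forall x, RaR u x.

Definition corner_in_J (e : R) : Prop := forall r, jacobson (e * r * (1 - e)).

Definition feckly_clean_elt (a : R) : Prop :=
  exists e u, a = e + u /\ full u /\ corner_in_J e.

Definition feckly_clean : Prop := forall a, feckly_clean_elt a.

Definition subset_Max (A : (R -> Prop) -> Prop) : Prop :=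
  forall P, A P -> maximal_ideal P.

Definition V (I : R -> Prop) (P : R -> Prop) : Prop :=
  maximal_ideal P /\ forall x, I x -> P x.

Definition Va (a : R) := V (RaR a).

(* Compactness for the topology whose closed sets are the V(I), I ideal:
   every cover of A by open sets Max(R) \ V(I k) has a finite subcover. *)
Definition compact (A : (R -> Prop) -> Prop) : Prop :=
  forall (K : Type) (I : K -> (R -> Prop)),
    (forall k, is_ideal (I k)) ->
    (forall P, A P -> exists k, ~ V (I k) P) ->
    exists (n : nat) (ks : 'I_n -> K), forall P, A P -> exists i, ~ V (I (ks i)) P.

Definition disjoint_sets (A B : (R -> Prop) -> Prop) : Prop :=
  forall P, A P -> B P -> False.

End Defs.

(* Since J(R) lies in every maximal
   ideal, a maximal ideal contains e or 1 - e whenever eR(1-e) lies in J(R).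
   In a feckly clean ring, writing 1 - x = e + u with u full turns any x into
   such an e with V(x) in V(e) and V(1-x) in V(1-e). Separating two maximal
   ideals, then a maximal ideal from a compact set, then two compact sets, is
   the usual compactness argument (products of the 1 - e_i, resp. the e_i, over
   a finite subcover), each stage repaired by the decomposition above.
   Conversely, V(1-a) and V(a) are disjoint compact sets, and for e separating
   them a - e lies in no maximal ideal, i.e. is full. *)

From Pilot Require Import Defs.
From mathcomp Require Import all_boot all_order all_algebra.
From mathcomp Require Import boolp.
From mathcomp Require classical_sets.
Set Implicit Arguments. Unset Strict Implicit. Unset Printing Implicit Defensive.
Import GRing.Theory.
Local Open Scope ring_scope.

Definition subset_chain (T : Type) (F : (T -> Prop) -> Prop) : Prop :=
  forall X Y, F X -> F Y -> (forall x, X x -> Y x) \/ (forall x, Y x -> X x).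

Definition union_of (T : Type) (F : (T -> Prop) -> Prop) (x : T) : Prop :=
  exists2 X, F X & X x.

Lemma zorn_above (T : Type) (Q : (T -> Prop) -> Prop) (I0 : T -> Prop) :
  Q I0 ->
  (forall F, (forall X, F X -> Q X) -> subset_chain F -> (exists X, F X) ->
     Q (union_of F)) ->
  exists M, [/\ Q M, (forall x, I0 x -> M x) &
    forall N, Q N -> (forall x, M x -> N x) -> forall x, N x -> M x].
Proof.
move=> QI0 Qchain.
pose T' := {X : T -> Prop | Q X /\ forall x, I0 x -> X x}.
pose le (X Y : T') := `[< forall x, sval X x -> sval Y x >].
have bot : T' by exists I0.
have [||A Atot|[M [QM I0M]] Mmax] := @classical_sets.ZL_preorder T' bot le.
- by move=> X; apply/asboolP.
- by move=> X Y Z /asboolP XY /asboolP YZ; apply/asboolP => x /XY /YZ.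
- have [[X0 AX0]|noA] := pselect (exists X, A X); last first.
    by exists bot => X AX; case: noA; exists X.
  pose F X := exists2 Y : T', A Y & sval Y = X.
  have QF : Q (union_of F).
    apply: Qchain; first by move=> _ [Y _ <-]; case: (svalP Y).
      move=> _ _ [Y AY <-] [Z AZ <-].
      by case: (Atot Y Z AY AZ) => /asboolP; [left|right].
    by exists (sval X0), X0.
  have I0F x : I0 x -> union_of F x.
    by move=> I0x; exists (sval X0); [exists X0|exact: (proj2 (svalP X0))].
  exists (exist _ (union_of F) (conj QF I0F)) => Y AY; apply/asboolP => x Yx.
  by exists (sval Y) => //; exists Y.
exists M; split => // N QN MN.
have I0N x : I0 x -> N x by move/I0M/MN.
by apply/asboolP/(Mmax (exist _ N (conj QN I0N))); apply/asboolP.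
Qed.

Section MaximalIdeals.
Variable R : pzRingType.
Implicit Types (I J L P Q G : R -> Prop) (F A B C D : (R -> Prop) -> Prop) (a e u x : R).

Lemma is_idealE I :
  is_ideal I <-> is_left_ideal I /\ forall r x, I x -> I (x * r).
Proof. by split=> [[I0 ID Il Ir]|[[I0 ID Il] Ir]]; [split; [split|]|split]. Qed.

Lemma ideal_opp I x : is_ideal I -> I x -> I (- x).
Proof. by case=> _ _ Il _ Ix; rewrite -mulN1r; apply: Il. Qed.

Lemma ideal_sub I x y : is_ideal I -> I x -> I y -> I (x - y).
Proof. by move=> HI Ix Iy; case: (HI) => _ ID _ _; apply: ID => //; apply: ideal_opp. Qed.

Lemma ideal_sum I n (F : 'I_n -> R) :
  is_ideal I -> (forall i, I (F i)) -> I (\sum_(i < n) F i).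
Proof. by case=> I0 ID _ _ IF; apply: big_ind. Qed.

Lemma ideal_prod I (T : eqType) (s : seq T) (c : T -> R) i :
  is_ideal I -> i \in s -> I (c i) -> I (\prod_(j <- s) c j).
Proof.
case=> _ _ Il Ir; elim: s => [//|j s IHs]; rewrite inE big_cons.
by case/orP=> [/eqP<- /Ir|/IHs IHi /IHi /Il].
Qed.

Lemma ideal_one_sub_prod I (T : Type) (s : seq T) (c : T -> R) :
  is_ideal I -> (forall i, I (1 - c i)) -> I (1 - \prod_(j <- s) c j).
Proof.
case=> I0 ID Il _ Ic; elim: s => [|j s IHs]; first by rewrite big_nil subrr.
rewrite big_cons.
have -> : 1 - c j * \prod_(k <- s) c k = (1 - c j) + c j * (1 - \prod_(k <- s) c k).
  by rewrite mulrBr mulr1 addrA subrK.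
by apply: ID; [exact: Ic|exact: Il].
Qed.

Lemma left_ideal_proper1 L : is_left_ideal L -> Defs.proper L <-> ~ L 1.
Proof.
case=> _ _ Ll; split=> [[x Lx] L1|L1]; last by exists 1.
by apply: Lx; rewrite -(mulr1 x); apply: Ll.
Qed.

Lemma ideal_proper1 I : is_ideal I -> Defs.proper I <-> ~ I 1.
Proof. by move/is_idealE=> [/left_ideal_proper1]. Qed.

Lemma maximal_ideal_neq1 P : maximal_ideal P -> ~ P 1.
Proof. by case=> HP /(ideal_proper1 HP). Qed.

Lemma maximal_ideal_compl P e : maximal_ideal P -> P e -> ~ P (1 - e).
Proof.
move=> HP Pe P1e; apply: (maximal_ideal_neq1 HP).
by case: HP => [[_ PD _ _] _ _]; rewrite -(subrK e 1); apply: PD.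
Qed.

Lemma maximal_ideal_absorb P I x :
  maximal_ideal P -> is_ideal I -> (forall y, P y -> I y) -> I x -> ~ P x -> I 1.
Proof.
move=> [_ _ Pmax] HI PI Ix Px; apply: contrapT => I1.
by apply/Px/(Pmax I HI PI _ x Ix)/ideal_proper1.
Qed.

Lemma ideal_add I J : is_ideal I -> is_ideal J ->
  is_ideal (fun z => exists x y, [/\ I x, J y & z = x + y]).
Proof.
move=> [I0 ID Il Ir] [J0 JD Jl Jr]; split.
- by exists 0, 0; rewrite addr0.
- move=> _ _ [x1 [y1 [Ix1 Jy1 ->]]] [x2 [y2 [Ix2 Jy2 ->]]].
  by exists (x1 + x2), (y1 + y2); rewrite addrACA; split; [apply: ID|apply: JD|].
- move=> r _ [x [y [Ix Jy ->]]].
  by exists (r * x), (r * y); rewrite mulrDr; split; [apply: Il|apply: Jl|].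
- move=> r _ [x [y [Ix Jy ->]]].
  by exists (x * r), (y * r); rewrite mulrDl; split; [apply: Ir|apply: Jr|].
Qed.

Lemma left_ideal_chain F : (forall X, F X -> is_left_ideal X) ->
  subset_chain F -> (exists X, F X) -> is_left_ideal (union_of F).
Proof.
move=> HF Fch [X0 FX0]; split.
- by exists X0 => //; case: (HF _ FX0).
- move=> x y [X FX Xx] [Y FY Yy].
  have [XY|YX] := Fch X Y FX FY.
    by exists Y => //; case: (HF _ FY) => _ YD _; apply: YD => //; apply: XY.
  by exists X => //; case: (HF _ FX) => _ XD _; apply: XD => //; apply: YX.
- by move=> r x [X FX Xx]; exists X => //; case: (HF _ FX) => _ _ Xl; apply: Xl.
Qed.

Lemma ideal_chain F : (forall X, F X -> is_ideal X) ->
  subset_chain F -> (exists X, F X) -> is_ideal (union_of F).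
Proof.
move=> HF Fch FX; apply/is_idealE; split.
  by apply: left_ideal_chain => // X /HF /is_idealE[].
by move=> r x [X FX' Xx]; exists X => //; case: (HF _ FX') => _ _ _; apply.
Qed.

Lemma maximal_ideal_above I : is_ideal I -> ~ I 1 ->
  exists2 P, maximal_ideal P & forall x, I x -> P x.
Proof.
move=> HI I1.
have chain_proper F : (forall X, F X -> is_ideal X /\ ~ X 1) ->
    subset_chain F -> (exists X, F X) -> is_ideal (union_of F) /\ ~ union_of F 1.
  move=> HF Fch FX; split; first by apply: ideal_chain => // X /HF[].
  by case=> X /HF[].
have [M [[HM M1] IM Mmax]] :=
  zorn_above (Q := fun X => is_ideal X /\ ~ X 1) (conj HI I1) chain_proper.
exists M => //; split => //; first exact/ideal_proper1.
by move=> N HN MN /(ideal_proper1 HN) N1; apply: Mmax.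
Qed.

Lemma maximal_left_ideal_above L : is_left_ideal L -> ~ L 1 ->
  exists2 M, maximal_left_ideal M & forall x, L x -> M x.
Proof.
move=> HL L1.
have chain_proper F : (forall X, F X -> is_left_ideal X /\ ~ X 1) ->
    subset_chain F -> (exists X, F X) -> is_left_ideal (union_of F) /\ ~ union_of F 1.
  move=> HF Fch FX; split; first by apply: left_ideal_chain => // X /HF[].
  by case=> X /HF[].
have [M [[HM M1] LM Mmax]] :=
  zorn_above (Q := fun X => is_left_ideal X /\ ~ X 1) (conj HL L1) chain_proper.
exists M => //; split => //; first exact/left_ideal_proper1.
by move=> N HN MN /(left_ideal_proper1 HN) N1; apply: Mmax.
Qed.

Definition ideal_gen G x : Prop :=
  exists n (r s g : 'I_n -> R),
    (forall i, G (g i)) /\ x = \sum_(i < n) r i * g i * s i.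

Definition ord_cat m n (f1 : 'I_m -> R) (f2 : 'I_n -> R) (i : 'I_(m + n)) : R :=
  match split i with inl j => f1 j | inr j => f2 j end.

Lemma ord_cat_lshift m n f1 f2 (j : 'I_m) : @ord_cat m n f1 f2 (lshift n j) = f1 j.
Proof. by rewrite /ord_cat (unsplitK (inl _ j)). Qed.

Lemma ord_cat_rshift m n f1 f2 (j : 'I_n) : @ord_cat m n f1 f2 (rshift m j) = f2 j.
Proof. by rewrite /ord_cat (unsplitK (inr _ j)). Qed.

Lemma is_ideal_gen G : is_ideal (ideal_gen G).
Proof.
split.
- by exists 0%N, (fun _ => 0), (fun _ => 0), (fun _ => 0); split; [case|rewrite big_ord0].
- move=> _ _ [m [r1 [s1 [g1 [Gg1 ->]]]]] [n [r2 [s2 [g2 [Gg2 ->]]]]].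
  exists (m + n)%N, (ord_cat r1 r2), (ord_cat s1 s2), (ord_cat g1 g2); split.
    by move=> i; rewrite /ord_cat; case: (split i).
  by rewrite big_split_ord; congr (_ + _); apply: eq_bigr => i _;
    rewrite ?ord_cat_lshift ?ord_cat_rshift.
- move=> c _ [n [r [s [g [Gg ->]]]]]; exists n, (fun i => c * r i), s, g.
  by split=> //; rewrite mulr_sumr; apply: eq_bigr => i _; rewrite !mulrA.
- move=> c _ [n [r [s [g [Gg ->]]]]]; exists n, r, (fun i => s i * c), g.
  by split=> //; rewrite mulr_suml; apply: eq_bigr => i _; rewrite !mulrA.
Qed.

Lemma ideal_gen_in G x : G x -> ideal_gen G x.
Proof.
by exists 1%N, (fun _ => 1), (fun _ => 1), (fun _ => x); rewrite big_ord1 mul1r mulr1.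
Qed.

Lemma ideal_gen_min G J : is_ideal J -> (forall x, G x -> J x) ->
  forall x, ideal_gen G x -> J x.
Proof.
move=> HJ GJ _ [n [r [s [g [Gg ->]]]]]; apply: ideal_sum => // i.
by case: HJ => _ _ Jl Jr; apply/Jr/Jl/GJ.
Qed.

Lemma RaRE a : RaR a = ideal_gen (eq a).
Proof.
apply: funext => x; apply: propext; split=> [[n [r [s ->]]]|[n [r [s [g [ag ->]]]]]].
  by exists n, r, s, (fun _ => a).
by exists n, r, s; apply: eq_bigr => i _; rewrite -ag.
Qed.

Lemma is_ideal_RaR a : is_ideal (RaR a).
Proof. by rewrite RaRE; apply: is_ideal_gen. Qed.

Lemma RaR_self a : RaR a a.
Proof. by rewrite RaRE; apply: ideal_gen_in. Qed.

Lemma RaR_min a J : is_ideal J -> J a -> forall x, RaR a x -> J x.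
Proof. by move=> HJ Ja; rewrite RaRE; apply: ideal_gen_min => // _ <-. Qed.

Lemma full_RaR1 u : RaR u 1 -> full u.
Proof.
move=> RaRu1 x; rewrite -(mul1r x).
by case: (is_ideal_RaR u) => _ _ _; apply.
Qed.

Lemma VaP a P : Va a P <-> maximal_ideal P /\ P a.
Proof.
split=> [[HP aP]|[HP Pa]]; first by split=> //; apply/aP/RaR_self.
by split=> //; apply: RaR_min => //; case: HP.
Qed.

Lemma full_notin_maximal u P : full u -> maximal_ideal P -> ~ P u.
Proof.
move=> fu HP Pu; apply: (maximal_ideal_neq1 HP).
by apply: (RaR_min (J := P)) (fu 1) => //; case: HP.
Qed.

Lemma full_of_notin_maximal u : (forall P, maximal_ideal P -> ~ P u) -> full u.
Proof.
move=> notin; apply: full_RaR1; apply: contrapT => nRaR1.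
have [P HP RaR_P] := maximal_ideal_above (is_ideal_RaR u) nRaR1.
exact/(notin P HP)/RaR_P/RaR_self.
Qed.

Lemma maximal_left_ideal_quot L s : maximal_left_ideal L -> ~ L s ->
  maximal_left_ideal (fun y => L (y * s)).
Proof.
move=> [[L0 LD Ll] _ Lmax] Ls.
split.
- split=> [|x y Lx Ly|r x Lx]; first by rewrite mul0r.
    by rewrite mulrDl; apply: LD.
  by rewrite -mulrA; apply: Ll.
- by exists 1; rewrite mul1r.
move=> I [I0 ID Il] LsI [w Iw] y Iy.
pose L' z := exists l i, [/\ L l, I i & z = l + i * s].
have HL' : is_left_ideal L'.
  split.
  - by exists 0, 0; rewrite mul0r addr0.
  - move=> _ _ [l1 [i1 [Ll1 Ii1 ->]]] [l2 [i2 [Ll2 Ii2 ->]]].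
    by exists (l1 + l2), (i1 + i2); rewrite mulrDl addrACA; split; [apply: LD|apply: ID|].
  - move=> r _ [l [i [Ll' Ii ->]]].
    by exists (r * l), (r * i); rewrite mulrDr mulrA; split; [apply: Ll|apply: Il|].
have LL' x : L x -> L' x by exists x, 0; rewrite mul0r addr0.
have [L'_proper|L'_full] := pselect (Defs.proper L').
  by apply: (Lmax L' HL' LL' L'_proper); exists 0, y; rewrite add0r.
(* [L + I s] is everything, so [w s = l + i s]: then [(w - i) s] is in [L],
   putting [w] in [I] *)
have [l [i [Ll' Ii wsE]]] : L' (w * s).
  by apply: contrapT => nL'; apply: L'_full; exists (w * s).
case: Iw; rewrite -(subrK i w); apply: ID => //; apply: LsI.
by rewrite mulrBl wsE addrK.
Qed.

Lemma jacobson_maximal_ideal P x : maximal_ideal P -> jacobson x -> P x.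
Proof.
move=> [HP /(ideal_proper1 HP) P1 Pmax] Jx.
have [L HL PL] := maximal_left_ideal_above (proj1 (proj1 (is_idealE P) HP)) P1.
have [HLl /(left_ideal_proper1 HLl) L1 _] := HL; have [L0 LD Ll] := HLl.
pose A r := forall t, L (r * t).
have HA : is_ideal A.
  split=> [t|a b Aa Ab t|r a Aa t|r a Aa t].
  - by rewrite mul0r.
  - by rewrite mulrDl; apply: LD.
  - by rewrite -mulrA; apply: Ll.
  - by rewrite -mulrA; apply: Aa.
apply: (Pmax A HA) => [p Pp t||].
- by apply: PL; case: HP => _ _ _; apply.
- by exists 1 => /(_ 1); rewrite mulr1.
move=> t; have [Lt|Lt] := pselect (L t); first exact: Ll.
exact: (Jx _ (maximal_left_ideal_quot HL Lt)).
Qed.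

Definition Max_splitting e : Prop :=
  forall P, maximal_ideal P -> P e \/ P (1 - e).

Lemma Max_splittingC e : Max_splitting e -> Max_splitting (1 - e).
Proof. by move=> se P /se[]; rewrite subKr; [right|left]. Qed.

Lemma corner_Max_splitting e : corner_in_J e -> Max_splitting e.
Proof.
move=> ce P HP; have [Pe|Pe] := pselect (P e); [by left|right].
have HPi : is_ideal P by case: HP.
have [p [y [Pp RaRy yE]]] :
    exists p y, [/\ P p, RaR e y & 1 = p + y].
  apply: contrapT => no1.
  have HK := ideal_add HPi (is_ideal_RaR e).
  apply: no1; apply: (maximal_ideal_absorb HP HK _ _ Pe) => [z Pz|].
  - by exists z, 0; rewrite addr0; split=> //; case: (is_ideal_RaR e).
  - by exists 0, e; rewrite add0r; split=> //; [case: HPi|apply: RaR_self].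
(* each term [r e s (1 - e)] of [y (1 - e)] lies in [J(R)], hence in [P] *)
have [n [r [s yE']]] := RaRy.
have -> : 1 - e = p * (1 - e) + y * (1 - e) by rewrite -mulrDl -yE mul1r.
case: (HPi) => _ PD Pl Pr; apply: PD; first by apply: Pr.
rewrite yE' mulr_suml; apply: ideal_sum => // i.
by rewrite -!mulrA; apply: Pl; rewrite mulrA; apply: jacobson_maximal_ideal.
Qed.

Lemma maximal_comaximal P Q : maximal_ideal P -> maximal_ideal Q -> P <> Q ->
  exists2 y, P y & Q (1 - y).
Proof.
move=> HP HQ neqPQ.
have [HPi HQi] : is_ideal P /\ is_ideal Q by case: HP; case: HQ.
have [p Pp Qp] : exists2 p, P p & ~ Q p.
  apply: contrapT => PQ; apply: neqPQ; apply: funext => x; apply: propext.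
  have PsubQ y : P y -> Q y by move=> Py; apply: contrapT => Qy; apply: PQ; exists y.
  split=> [|Qx]; first exact: PsubQ.
  by case: HP => _ _ Pmax; apply: (Pmax Q HQi PsubQ) => //; case: HQ.
have HK := ideal_add HQi HPi.
have [q [y [Qq Py ->]]] : exists q y, [/\ Q q, P y & 1 = q + y].
  apply: (maximal_ideal_absorb HQ HK _ _ Qp) => [x Qx|].
  - by exists x, 0; rewrite addr0; split=> //; case: HPi.
  - by exists 0, p; rewrite add0r; split=> //; case: HQi.
by exists y; rewrite // addrK.
Qed.

Definition separated A B x : Prop :=
  (forall P, A P -> P x) /\ (forall Q, B Q -> Q (1 - x)).

Lemma separatedC A B x : separated A B x -> separated B A (1 - x).
Proof. by case=> Ax Bx; split=> // P /Ax; rewrite subKr. Qed.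

Lemma subset_Max_eq P : maximal_ideal P -> subset_Max (eq P).
Proof. by move=> HP _ <-. Qed.

Lemma subset_Max_Va a : subset_Max (Va a).
Proof. by move=> P /VaP[]. Qed.

Lemma Va_disjoint a : disjoint_sets (Va (1 - a)) (Va a).
Proof. by move=> P /VaP[HP P1a] /VaP[_ Pa]; apply: maximal_ideal_compl HP Pa P1a. Qed.

Lemma Va_compact a : compact (Va a).
Proof.
move=> K I HI cover.
have [[P0 VP0]|VaE] := pselect (exists P, Va a P); last first.
  have ord0_K : 'I_0 -> K by case.
  by exists 0%N, ord0_K => P VP; case: VaE; exists P.
have [k0 _] := cover P0 VP0.
pose G x := x = a \/ exists k, I k x.
have [[n [r [s [g [Gg gE]]]]]|nG1] := pselect (ideal_gen G 1); last first.
  have [P HP GP] := maximal_ideal_above (is_ideal_gen G) nG1.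
  have P_in_Va : Va a P by apply/VaP; split=> //; apply/GP/ideal_gen_in; left.
  have [k nVP] := cover P P_in_Va.
  by case: nVP; split=> // x Ix; apply/GP/ideal_gen_in; right; exists k.
have cover_g i : exists k, g i = a \/ I k (g i).
  by case: (Gg i) => [->|[k Ik]]; [exists k0; left|exists k; right].
exists n, (fun i => projT1 (cid (cover_g i))) => P VP; apply: contrapT => noi.
have [HP Pa] := proj1 (VaP _ _) VP.
apply: (maximal_ideal_neq1 HP); rewrite gE; apply: ideal_sum; first by case: HP.
move=> i; case: HP => [[_ _ Pl Pr] _ _]; apply/Pr/Pl.
case: (projT2 (cid (cover_g i))) => [->//|Ig].
have [[_ IP]|nV] := pselect (V (I (projT1 (cid (cover_g i)))) P); first exact: IP.
by case: noi; exists i.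
Qed.

(* [1 - x] is the product of the [1 - e_i] over a finite subcover of [C] by the
   open sets [Max(R) \ V(e)] *)
Lemma separated_compact D C : subset_Max D -> subset_Max C -> compact C ->
  (forall Q, C Q -> exists2 e, Max_splitting e & separated D (eq Q) e) ->
  exists x, separated D C x.
Proof.
move=> sD sC cC sepC.
pose K := {e : R | Max_splitting e /\ forall P, D P -> P e}.
have [n [ks cover]] :
    exists n (ks : 'I_n -> K), forall Q, C Q -> exists i, ~ Va (sval (ks i)) Q.
  apply: (cC K (fun k => RaR (sval k))) => [k|Q CQ]; first exact: is_ideal_RaR.
  have [e se [De Q1e]] := sepC Q CQ.
  exists (exist _ e (conj se De)) => /VaP[HQ Qe].
  exact: maximal_ideal_compl HQ Qe (Q1e Q erefl).
exists (1 - \prod_(i < n) (1 - sval (ks i))); split=> [P DP|Q CQ].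
  apply: ideal_one_sub_prod => [|i]; first by case: (sD P DP).
  by rewrite subKr; apply: (proj2 (svalP (ks i))).
have HQ := sC Q CQ; have [i nVa] := cover Q CQ.
rewrite subKr; apply: (ideal_prod (i := i)); [by case: HQ|exact: mem_index_enum|].
have [Qe|//] := (proj1 (svalP (ks i))) Q HQ.
by case: nVa; apply/VaP.
Qed.

Lemma decomposition_separates x e u P : 1 - x = e + u -> full u ->
  corner_in_J e -> maximal_ideal P -> (P x -> P e) /\ (P (1 - x) -> P (1 - e)).
Proof.
move=> xE fu ce HP.
have HPi : is_ideal P by case: HP.
have nPu := full_notin_maximal fu HP.
have uE : u = (1 - x) - e by rewrite xE addrC addKr.
have [Pe|P1e] := corner_Max_splitting ce HP; split=> // Px; case: nPu.
  by rewrite uE; apply: ideal_sub.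
by rewrite uE addrAC; apply: ideal_sub.
Qed.

Lemma feckly_clean_separated A B x : feckly_clean R ->
  subset_Max A -> subset_Max B -> separated A B x ->
  exists2 e, corner_in_J e & separated A B e.
Proof.
move=> fc sA sB [Ax Bx]; have [e [u [xE [fu ce]]]] := fc (1 - x).
have sep := decomposition_separates xE fu ce.
exists e => //; split=> [P AP|Q BQ].
  by apply: (sep P (sA P AP)).1; apply: Ax.
by apply: (sep Q (sB Q BQ)).2; apply: Bx.
Qed.

Lemma feckly_clean_separated_compact A B : feckly_clean R ->
  subset_Max A -> subset_Max B -> compact A -> compact B -> disjoint_sets A B ->
  exists2 e, corner_in_J e & separated A B e.
Proof.
move=> fc sA sB cA cB dAB.
have split_sep D C x : subset_Max D -> subset_Max C -> separated D C x ->
    exists2 e, Max_splitting e & separated D C e.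
  by move=> sD sC /(feckly_clean_separated fc sD sC)[e /corner_Max_splitting]; exists e.
have sep_points P : A P -> forall Q, B Q ->
    exists2 e, Max_splitting e & separated (eq P) (eq Q) e.
  move=> AP Q BQ; have [HP HQ] := (sA P AP, sB Q BQ).
  have [|y Py Q1y] := maximal_comaximal HP HQ.
    by move=> PQ; apply: (dAB P AP); rewrite PQ.
  by apply: (split_sep _ _ y); [exact: subset_Max_eq..|split=> _ <-].
have sep_point_B P : A P -> exists2 e, Max_splitting e & separated B (eq P) e.
  move=> AP; have sP := subset_Max_eq (sA P AP).
  have [x Sx] := separated_compact sP sB cB (sep_points P AP).
  have [e se Se] := split_sep _ _ _ sP sB Sx.
  by exists (1 - e); [exact: Max_splittingC|exact: separatedC].
have [x Sx] := separated_compact sB sA cA sep_point_B.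
exact: feckly_clean_separated fc sA sB (separatedC Sx).
Qed.

Lemma feckly_clean_elt_separated a e :
  corner_in_J e -> separated (Va (1 - a)) (Va a) e -> feckly_clean_elt a.
Proof.
move=> ce [VeA VeB]; exists e, (a - e); split; first by rewrite addrC subrK.
split=> //; apply: full_of_notin_maximal => P HP Pu.
have HPi : is_ideal P by case: HP.
have [Pe|P1e] := corner_Max_splitting ce HP.
- have Pa : P a by rewrite -(subrK e a); case: HPi => _ PD _ _; apply: PD.
  exact: maximal_ideal_compl HP Pe (VeB P (proj2 (VaP _ _) (conj HP Pa))).
- have P1a : P (1 - a).
    have -> : 1 - a = (1 - e) - (a - e) by rewrite opprB addrA subrK.
    exact: ideal_sub.
  exact: maximal_ideal_compl HP (VeA P (proj2 (VaP _ _) (conj HP P1a))) P1e.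
Qed.

End MaximalIdeals.

Theorem corollary2p4 (R : pzRingType) :
  feckly_clean R <->
  (forall A B : (R -> Prop) -> Prop,
     subset_Max A -> subset_Max B -> compact A -> compact B -> disjoint_sets A B ->
     exists e : R,
       (forall P, A P -> Va e P) /\ (forall P, B P -> Va (1 - e) P) /\ corner_in_J e).
Proof.
split=> [fc A B sA sB cA cB dAB|sepAB a].
- have [e ce [Ae Be]] := feckly_clean_separated_compact fc sA sB cA cB dAB.
  exists e; split; [|split=> //] => P AP; apply/VaP.
    by split; [apply: sA|apply: Ae].
  by split; [apply: sB|apply: Be].
- have [e [VeA [VeB ce]]] := sepAB (Va (1 - a)) (Va a)
    (@subset_Max_Va R _) (@subset_Max_Va R _) (@Va_compact R _) (@Va_compact R _)
    (@Va_disjoint R a).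
  apply: (feckly_clean_elt_separated ce).
  by split=> P; [move/VeA|move/VeB]; case/VaP.
Qed.
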